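(* Let $f(t)=at^2+bt+c\in\mathbb{Z}[t]$ be irreducible over $\mathbb{Q}$ with $a\ne 0$, and let $\alpha$ be a root of $f$ in its splitting field. Then for any $k\in\mathbb{N}$ there exist integers $m,n,A,B$ with $A\ne 0$ and $\gcd(A,B)=1$ such that $(ma\alpha+n)^k=A\alpha+B$. *)

From mathcomp Require Import all_boot all_order all_algebra all_field.
Set Implicit Arguments. Unset Strict Implicit. Unset Printing Implicit Defensive.
Import GRing.Theory Num.Theory.
Local Open Scope ring_scope.

Definition quadQ (a b c : int) : {poly rat} :=
  (a%:~R) *: 'X^2 + (b%:~R) *: 'X + (c%:~R)%:P.

(* Put g := 2 a alpha + b, so that g^2 = D := b^2 - 4ac, and m0 := 2a(k+1).  Then
   m a alpha + n = 1 + m0 g for m = 2 m0, n = 1 + m0 b, and expanding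
   (1 + m0 g)^k = Q + P g in Z[sqrt D] gives A = 2aP, B = Q + bP.  Since
   P = k m0 (mod m0^2) with 0 < k < m0, A is nonzero and 2a divides P, so gcd(A, B) = 1 as soon as
   Q and P are coprime.
   A common divisor of Q and P divides their norm N^k, N = 1 - m0^2 D; but modulo
   N one has Q = 2^(k-1), and N is odd, hence gcd(Q, N) = 1. *)

From mathcomp Require Import all_boot all_order all_algebra all_field.
From mathcomp Require Import ring zify.
Import GRing.Theory Num.Theory.
Local Open Scope ring_scope.

Section QuadraticIntegers.

Variable D : int.

(* A pair (q, p) stands for q + p sqrt(D). *)
Definition qmul (x y : int * int) : int * int :=
  (x.1 * y.1 + D * x.2 * y.2, x.1 * y.2 + x.2 * y.1).

Fixpoint qexp (x : int * int) (j : nat) : int * int :=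
  if j is j'.+1 then qmul (qexp x j') x else (1, 0).

Definition qnorm (x : int * int) : int := x.1 ^+ 2 - D * x.2 ^+ 2.

Lemma qexp_eval (R : comPzRingType) (g : R) (x : int * int) (j : nat) :
  g ^+ 2 = D%:~R ->
  (x.1%:~R + x.2%:~R * g) ^+ j = (qexp x j).1%:~R + (qexp x j).2%:~R * g.
Proof.
move=> gD; elim: j => [|j IHj] /=; first by rewrite expr0; ring.
by rewrite exprSr IHj /= !rmorphD !rmorphM /= -gD; ring.
Qed.

Lemma qnormM x y : qnorm (qmul x y) = qnorm x * qnorm y.
Proof. rewrite /qnorm /=; ring. Qed.

Lemma qnorm_exp x j : qnorm (qexp x j) = qnorm x ^+ j.
Proof.
elim: j => [|j IHj] /=; last by rewrite qnormM IHj exprSr.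
by rewrite /qnorm expr0 /=; ring.
Qed.

Lemma qexp_1m_mod_m (m : int) (j : nat) : exists u v : int,
  (qexp (1, m) j).1 = 1 + m * u /\ (qexp (1, m) j).2 = m * (j%:Z + m * v).
Proof.
elim: j => [|j [u [v [IH1 IH2]]]]; first by exists 0, 0; split => /=; ring.
rewrite /= IH1 IH2; exists (u + D * m * (j%:Z + m * v)), (v + u).
by rewrite -addn1 PoszD; split; ring.
Qed.

(* Modulo N = 1 - D m^2 we have (1 + m g)^2 = 2 (1 + m g) whenever g^2 = D. *)
Lemma qexp_1m_mod_norm (m : int) (j : nat) : exists u v : int,
  (qexp (1, m) j.+1).1 = 2 ^+ j + qnorm (1, m) * u /\
  (qexp (1, m) j.+1).2 = 2 ^+ j * m + qnorm (1, m) * v.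
Proof.
elim: j => [|j [u [v [IH1 IH2]]]]; first by exists 0, 0; split => /=; ring.
rewrite /= in IH1 IH2 *; rewrite IH1 IH2.
exists (u + m * D * v - 2 ^+ j), (v + m * u); rewrite exprS /qnorm /=.
by split; ring.
Qed.

Lemma qexp_1m_coprime (m : int) (j : nat) :
  (2 %| m)%Z -> (0 < j)%N -> coprimez (qexp (1, m) j).1 (qexp (1, m) j).2.
Proof.
case: j => // j /dvdzP [h ->] _.
have [u [v [Q_mod _]]] := qexp_1m_mod_norm (h * 2) j.
set Q := (qexp _ _).1 in Q_mod *; set P := (qexp _ _).2.
have odd_norm : coprimez (qnorm (1, h * 2)) 2.
  have -> : qnorm (1, h * 2) = (- 2 * h ^+ 2 * D) * 2 + 1 by rewrite /qnorm /=; ring.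
  by rewrite /coprimez gcdzC gcdzMDl gcdz1.
have coQN : coprimez Q (qnorm (1, h * 2) ^+ j.+1).
  apply: coprimezXr; rewrite coprimez_sym /coprimez Q_mod addrC [_ * u]mulrC gcdzMDl.
  by rewrite -/(coprimez _ _) coprimez_sym coprimezXl // coprimez_sym.
rewrite -qnorm_exp /coprimez /qnorm -/Q -/P -mulrN expr2 gcdzMDl in coQN.
by move: coQN; rewrite -/(coprimez _ _) coprimezMr coprimezN coprimez_pexpr // => /andP [].
Qed.

Lemma qexp_1m_snd_neq0 (m : int) (j : nat) :
  (0 < j)%N -> (j < `|m|)%N -> (qexp (1, m) j).2 != 0.
Proof.
move=> j_gt0 j_lt_m; have [u [v [_ ->]]] := qexp_1m_mod_m m j.
have m_neq0 : m != 0 by rewrite -absz_gt0; lia.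
rewrite mulf_neq0 //; apply: contraTneq j_lt_m => /eqP.
rewrite addr_eq0 => /eqP j_eq; rewrite -leqNgt dvdn_leq //.
by rewrite -(dvdzE m j) j_eq rpredN dvdz_mulr.
Qed.

End QuadraticIntegers.

Lemma coprimez_mul_add (Q P b c : int) :
  coprimez Q P -> (c %| P)%Z -> coprimez (c * P) (Q + b * P).
Proof.
move=> coQP cP; rewrite coprimez_sym coprimezMr.
have coBP : coprimez (Q + b * P) P.
  by rewrite coprimez_sym /coprimez addrC gcdzMDl -/(coprimez _ _) coprimez_sym.
by rewrite coBP andbT; apply: coprime_dvdr cP coBP.
Qed.

Lemma root_quadQ_discriminant (F : numFieldType) (a b c : int) (alpha : F) :
  root (map_poly (ratr : rat -> F) (quadQ a b c)) alpha ->
  ((2 * a)%:~R * alpha + b%:~R) ^+ 2 = (b ^+ 2 - 4 * a * c)%:~R.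
Proof.
move=> /rootP root0.
rewrite /quadQ !rmorphD /= !map_polyZ /= map_polyXn map_polyX map_polyC in root0.
rewrite /= !hornerE !ratr_int in root0.
have {}root0 : a%:~R * alpha ^+ 2 + b%:~R * alpha + c%:~R = 0 by rewrite expr2 mulrA.
transitivity (4 * a%:~R * (a%:~R * alpha ^+ 2 + b%:~R * alpha + c%:~R)
  + (b ^+ 2 - 4 * a * c)%:~R : F); first ring.
by rewrite root0 mulr0 add0r.
Qed.

Theorem lemma4p1 (a b c : int) (alpha : algC) (k : nat) :
  a != 0 ->
  irreducible_poly (quadQ a b c) ->
  root (map_poly (ratr : rat -> algC) (quadQ a b c)) alpha ->
  (0 < k)%N ->
  exists m n A B : int,
    [/\ A != 0, gcdz A B = 1%N &
        ((m * a)%:~R * alpha + n%:~R) ^+ k = A%:~R * alpha + B%:~R].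
Proof.
move=> a_neq0 _ /root_quadQ_discriminant disc k_gt0.
set D := b ^+ 2 - 4 * a * c in disc; set g := _ + b%:~R in disc.
set m : int := 2 * a * k.+1.
have [_ [v [_ P_mod]]] := qexp_1m_mod_m D m k.
set Q := (qexp D (1, m) k).1; set P := (qexp D (1, m) k).2.
exists (2 * m), (1 + m * b), (2 * a * P), (Q + b * P); split.
- rewrite !mulf_neq0 // qexp_1m_snd_neq0 // /m !abszM.
  have a_pos : (0 < `|a|)%N by rewrite absz_gt0.
  nia.
- apply/eqP; apply: coprimez_mul_add.
    by apply: qexp_1m_coprime k_gt0; rewrite /m -mulrA dvdz_mulr.
  by rewrite /P P_mod; apply/dvdz_mulr/dvdz_mulr.
- have -> : (2 * m * a)%:~R * alpha + (1 + m * b)%:~R = 1 + m%:~R * g by rewrite /g; ring.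
  by rewrite (qexp_eval _ _ _ (1, m) k disc) /g; ring.
Qed.
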